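(* Let $u=u_1\ldots u_n\in\mathbb{P}^*$ have an increasing/decreasing factorization, and fix $1\le i\le n-1$. Let $\mathcal{S}^{(i)}(u)$ be the set of words $w=w_1\ldots w_m\in\mathbb{P}^*$ such that (i) $u$ embeds into the suffix $w_{m-n+1}\ldots w_m$ (i.e. $u\le w_{m-n+1}\ldots w_m$ letterwise), and (ii) the leftmost embedding of $u$ into $w$ occupies positions $m-2n+i+1,\ldots,m-n+i$ (so it overlaps the final $n$ positions in exactly $i$ positions). Let $S^{(i)}(u;t,x)=\sum_{w\in\mathcal{S}^{(i)}(u)}t^{|w|}x^{\Sigma(w)}$. Then, with $s_i=u_{i+1}\ldots u_n$, $$S^{(i)}(u;t,x)=S(u;t,x)\,t^{n-i}x^{d_i(u)+\Sigma(s_i)}\left(\frac{1}{1-x}\right)^{n-i}.$$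
   Context: $\mathbb{P}$ is the set of positive integers with the usual order, $\mathbb{P}^*$ the finite words over $\mathbb{P}$. For $w=w_1\ldots w_n$, $|w|=n$, $\Sigma(w)=\sum w_i$, $\mathrm{wt}(w)=t^{|w|}x^{\Sigma(w)}$. For words $u,w$, an embedding of $u$ into $w$ is a string $v$ of $|u|$ consecutive letters of $w$ whose $i$-th letter is $\ge$ the $i$-th letter of $u$ for every $i$; $u\le w$ means such an embedding exists. $\mathcal{S}(u)$ is the set of words $w$ with $u\le w$ such that the last $|u|$ letters of $w$ form the only embedding of $u$ into $w$, and $S(u;t,x)=\sum_{w\in\mathcal{S}(u)}\mathrm{wt}(w)$. $u=u_1\ldots u_n$ has an increasing/decreasing factorization if $u_1\le\cdots\le u_n$ or there is $k<n$ with $u_1\le\cdots\le u_k>u_{k+1}\ge\cdots\ge u_n$. $D^{(i)}(u)=\{n-i+j:1\le j\le i,\ u_j>u_{n-i+j}\}$ and $d_i(u)=\sum_{n-i+j\in D^{(i)}(u)}(u_j-u_{n-i+j})$. *)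

(* Words over P are seq nat with all letters positive. *)
From mathcomp Require Import all_boot.
Set Implicit Arguments. Unset Strict Implicit. Unset Printing Implicit Defensive.

Definition posword (w : seq nat) : bool := all (fun a => 0 < a) w.

Definition embeds_at (u w : seq nat) (p : nat) : bool :=
  (p + size u <= size w) &&
  all (fun j => nth 0 u j <= nth 0 w (p + j)) (iota 0 (size u)).

Definition embeds (u w : seq nat) : bool :=
  has (embeds_at u w) (iota 0 (size w).+1).

(* w in S(u): u <= w and the last |u| letters form the only embedding *)
Definition inS (u w : seq nat) : bool :=
  embeds u w && embeds_at u w (size w - size u) &&
  all (fun p => embeds_at u w p ==> (p == size w - size u)) (iota 0 (size w).+1).

(* w in S^(i)(u), with n = |u|, m = |w|: u embeds into the last n letters,
   and the leftmost embedding starts at 1-indexed position m-2n+i+1,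
   i.e. 0-indexed position m+i-2n (which must be >= 0). *)
Definition inSi (u : seq nat) (i : nat) (w : seq nat) : bool :=
  let n := size u in let m := size w in
  embeds_at u w (m - n) &&
  (2 * n <= m + i) && embeds_at u w (m + i - 2 * n) &&
  all (fun p => ~~ embeds_at u w p) (iota 0 (m + i - 2 * n)).

Definition incdec (u : seq nat) : bool :=
  sorted leq u ||
  has (fun k => sorted leq (take k u) && (nth 0 u k < nth 0 u k.-1)
                && sorted geq (drop k u))
      (iota 1 (size u).-1).

Definition d_ (i : nat) (u : seq nat) : nat :=
  let n := size u in
  \sum_(j < i) (if nth 0 u (n - i + j) < nth 0 u j
                then nth 0 u j - nth 0 u (n - i + j) else 0).

(* number of words over P of length m and letter-sum s satisfying P;
   such words have all letters <= s, so they are the tuples below. *)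
Definition cnt (P : seq nat -> bool) (m s : nat) : nat :=
  #|[set t : m.-tuple 'I_s.+1 |
      let w := map (@nat_of_ord _) (tval t) in
      posword w && (sumn w == s) && P w]|.

(* Cut a word of S^(i)(u) of length m after its first M = m - (n - i) letters.  The last
   n - i letters only have to dominate s_i letterwise; those of letter-sum Sigma(s_i) + j are
   counted by C(j + n - i - 1, n - i - 1), the coefficient of x^j in (1 - x)^-(n-i).  The
   first M letters form a word of S(u) whose last i letters moreover dominate u_1 ... u_i.
   Lowering these i letters by the excesses (u_j - u_(n-i+j))_+ maps such words bijectively
   onto the words of S(u) of length M and lowers the letter-sum by d_i(u).  Raising a word of
   S(u) back creates no new embedding of u because u, having an increasing/decreasing
   factorization, has no valley u_x > u_y < u_z with x < y < z. *)

From mathcomp Require Import all_boot zify.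
Set Implicit Arguments. Unset Strict Implicit. Unset Printing Implicit Defensive.

Fixpoint compositions (m s : nat) : seq (seq nat) :=
  if m is m'.+1 then [seq a :: w | a <- iota 1 s, w <- compositions m' (s - a)]
  else if s == 0 then [:: [::]] else [::].

Lemma mem_compositions m s (w : seq nat) :
  (w \in compositions m s) = [&& size w == m, posword w & sumn w == s].
Proof.
elim: m s w => [|m IHm] s [|a w] /=; [by case: s | by case: (s == 0) | |].
  by apply/negbTE/allpairsPdep => -[? [? []]].
apply/allpairsPdep/idP => [[b [v [+ + [-> ->]]]] |
                           /and3P[/eqP sz_w /andP[a_gt0 pos_w] /eqP sum_w]].
  rewrite mem_iota IHm /posword /= => /andP[b_gt0 b_le] /and3P[/eqP -> -> /eqP sum_v].
  by rewrite eqxx andbT /=; apply/andP; split; [lia | apply/eqP; lia].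
exists a, w; rewrite mem_iota IHm pos_w; split => //.
  by apply/andP; split; lia.
by apply/and3P; split => //; apply/eqP; lia.
Qed.

Lemma uniq_compositions m s : uniq (compositions m s).
Proof.
elim: m s => [|m IHm] s /=; first by case: (s == 0).
apply: allpairs_uniq_dep => //; first exact: iota_uniq.
by move=> [a x] [b y] _ _ /= [-> ->].
Qed.

Lemma mem_leq_sumn (x : seq nat) a : a \in x -> a <= sumn x.
Proof. by elim: x => //= b x IHx; rewrite inE => /orP[/eqP -> | /IHx]; lia. Qed.

Lemma cnt_compositions P m s : cnt P m s = count P (compositions m s).
Proof.
rewrite /cnt cardE -size_filter.
set val_t := fun t : m.-tuple 'I_s.+1 => map (@nat_of_ord _) (tval t).
rewrite -(size_map val_t); apply/perm_size/uniq_perm.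
- rewrite map_inj_uniq ?enum_uniq // => t1 t2 /(congr1 (map (@inord s))).
  rewrite -!map_comp !(@eq_map _ _ (inord \o _) id) ?map_id => [/val_inj //||] x /=;
  exact: inord_val.
- exact/filter_uniq/uniq_compositions.
move=> x; rewrite mem_filter mem_compositions.
apply/mapP/idP => [[t]|/andP[Px /and3P[sz_x pos_x sum_x]]].
  rewrite mem_enum inE /val_t => /andP[/andP[pos_t sum_t] Pt] ->.
  by rewrite Pt pos_t sum_t size_map size_tuple eqxx.
have ordK : map (@nat_of_ord _) (map (@inord s) x) = x.
  rewrite -map_comp -[RHS]map_id; apply/eq_in_map => a a_x /=.
  by rewrite inordK // ltnS -(eqP sum_x) mem_leq_sumn.
have sz_x' : size (map (@inord s) x) == m by rewrite size_map.
by exists (Tuple sz_x'); rewrite // mem_enum inE /val_t /= ordK pos_x sum_x Px.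
Qed.

Lemma count_compositionsS (P : pred (seq nat)) m s :
  count P (compositions m.+1 s) =
  \sum_(1 <= a < s.+1) count (fun w => P (a :: w)) (compositions m (s - a)).
Proof.
rewrite /= count_flatten sumnE !big_map /index_iota subSS subn0.
by apply: eq_bigr => a _; rewrite count_map.
Qed.

Lemma sum_triangle (F : nat -> nat -> nat) s :
  \sum_(1 <= a < s.+1) \sum_(0 <= t < (s - a).+1) F a (a + t) =
  \sum_(0 <= b < s.+1) \sum_(1 <= a < b.+1) F a b.
Proof.
elim: s => [|s IHs]; first by rewrite big_geq // big_nat1 big_geq.
rewrite [RHS]big_nat_recr //= -IHs [LHS]big_nat_recr //= subnn big_nat1 addn0.
rewrite [in RHS](@big_nat_recr _ _ _ s.+1) //= addnA -big_split /=; congr (_ + _).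
apply: eq_big_nat => a /andP[a_gt0 a_le].
by rewrite subSn ?big_nat_recr //=; congr (_ + F a _); lia.
Qed.

Lemma count_compositions_cat (Q R : pred (seq nat)) m1 m2 s :
  count (fun w => Q (take m1 w) && R (drop m1 w)) (compositions (m1 + m2) s) =
  \sum_(0 <= s1 < s.+1) count Q (compositions m1 s1) * count R (compositions m2 (s - s1)).
Proof.
elim: m1 Q s => [|m1 IHm1] Q s.
  rewrite add0n big_nat_recl //= subn0 big1 ?addn0 //.
  under eq_count => w do rewrite take0 drop0.
  by case: (Q [::]); rewrite /= ?mul1n // mul0n; exact: count_pred0.
rewrite addSn count_compositionsS.
under eq_bigr => a _.
  rewrite (IHm1 (fun x => Q (a :: x))).
  under eq_bigr => t _ do rewrite -{1}(addKn a t) -subnDA.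
  over.
rewrite (sum_triangle (fun a b => count (fun x => Q (a :: x)) (compositions m1 (b - a))
                                  * count R (compositions m2 (s - b)))).
by apply: eq_bigr => b _; rewrite count_compositionsS big_distrl.
Qed.

Lemma sum_shift_if (F : nat -> nat) n e :
  \sum_(0 <= t < n) (if e <= t then F (t - e) else 0) = \sum_(0 <= j < n - e) F j.
Proof.
elim: n => [|n IHn]; first by rewrite !big_geq.
rewrite big_nat_recr //= IHn; case: (leqP e n) => e_n.
  by rewrite subSn // big_nat_recr.
by rewrite addn0 (_ : n.+1 - e = n - e) //; lia.
Qed.

Lemma sum_rev_if (G : nat -> nat) c s : 0 < c ->
  \sum_(1 <= a < s.+1) (if c <= a then G (s - a) else 0) = \sum_(0 <= t < s.+1 - c) G t.
Proof.
move=> c_gt0; elim: s G => [|s IHs] G.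
  by rewrite big_geq // (_ : 1 - c = 0) ?big_geq //; lia.
rewrite big_nat_recr //= subnn.
rewrite (eq_big_nat _ _ (F2 := fun a => if c <= a then G (s - a).+1 else 0)); last first.
  by move=> a /andP[_ a_le]; rewrite subSn.
rewrite (IHs (fun t => G t.+1)); case: (leqP c s.+1) => c_le.
  rewrite (_ : s.+2 - c = (s.+1 - c).+1); last by lia.
  by rewrite big_nat_recl // addnC.
by rewrite addn0 (_ : s.+2 - c = 0) ?big_geq //; lia.
Qed.

Lemma hockey_stick N k : \sum_(0 <= j < N.+1) 'C(j + k, k) = 'C(N + k.+1, k.+1).
Proof.
elim: N => [|N IHN]; first by rewrite big_nat1 !add0n !binn.
by rewrite big_nat_recr // IHN addSnnS addSn.
Qed.

Lemma sum_convolution_if (F G : nat -> nat) d e s :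
  \sum_(0 <= s1 < s.+1)
     (if d <= s1 then F (s1 - d) else 0) * (if e <= s - s1 then G (s - s1 - e) else 0) =
  \sum_(0 <= j < s.+1) (if d + e + j <= s then F (s - (d + e) - j) * G j else 0).
Proof.
set H := fun j => if d + e + j <= s then F (s - (d + e) - j) * G j else 0.
rewrite big_nat_rev /=.
rewrite (eq_big_nat _ _ (F2 := fun t => if e <= t then H (t - e) else 0)); last first.
  move=> t /andP[_ t_le]; rewrite add0n subSS subKn /H; last by lia.
  case: (leqP e t) => e_t; last by rewrite muln0.
  have -> : (d + e + (t - e) <= s) = (d <= s - t) by apply/idP/idP; lia.
  by case: ifP => // _; congr (F _ * _); lia.
rewrite sum_shift_if (big_cat_nat _ (leq_subr e s.+1)) //= [X in _ + X]big1_seq ?addn0 //.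
move=> j /andP[_]; rewrite mem_index_iota /H; case: ifP => //; lia.
Qed.

Lemma all2P (S T : Type) (r : S -> T -> bool) x0 y0 (b : seq S) (v : seq T) :
  reflect (size b = size v /\ forall j, j < size b -> r (nth x0 b j) (nth y0 v j))
          (all2 r b v).
Proof.
elim: b v => [|c b IHb] [|a v] /=; first by constructor.
- by constructor => -[].
- by constructor => -[].
apply: (iffP andP) => [[r_ca /IHb[sz_bv r_bv]] | [[sz_bv] r_bv]].
  by split=> [|[|j]] //=; [rewrite sz_bv | move/r_bv].
by split; [exact: (r_bv 0) | apply/IHb; split => // j; exact: (r_bv j.+1)].
Qed.

Arguments all2P {S T r} x0 y0 {b v}.

Lemma count_dominating c b s : posword (c :: b) ->
  count (all2 leq (c :: b)) (compositions (size b).+1 s) =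
  if c + sumn b <= s then 'C(s - (c + sumn b) + size b, size b) else 0.
Proof.
elim: b c s => [|c' b IHb] c s /andP[c_gt0 pos_b]; rewrite count_compositionsS /=.
  transitivity (\sum_(1 <= a < s.+1) (if c <= a then (s - a == 0 : nat) else 0)).
    by apply: eq_bigr => a _; case: (c <= a); case: (s - a).
  rewrite (sum_rev_if (fun t => (t == 0 : nat))) // addn0 bin0.
  case: leqP => c_s; last by rewrite big_geq //; lia.
  by rewrite (_ : s.+1 - c = (s - c).+1) ?big_nat_recl ?big1 //; lia.
transitivity (\sum_(1 <= a < s.+1)
    (if c <= a then count (all2 leq (c' :: b)) (compositions (size b).+1 (s - a)) else 0)).
  by apply: eq_bigr => a _; case: (c <= a); rewrite //= count_pred0.
rewrite (sum_rev_if (fun t => count (all2 leq (c' :: b)) (compositions (size b).+1 t))) //.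
under eq_big_nat => t _ do rewrite IHb //.
rewrite (sum_shift_if (fun j => 'C(j + size b, size b))).
case: leqP => sum_s; last by rewrite big_geq //; lia.
by rewrite (_ : s.+1 - c - _ = (s - (c + (c' + sumn b))).+1) ?hockey_stick ?addnS //; lia.
Qed.

Lemma embeds_atP u w p :
  reflect (p + size u <= size w /\ forall j, j < size u -> nth 0 u j <= nth 0 w (p + j))
          (embeds_at u w p).
Proof.
apply: (iffP andP) => [[u_fits /allP u_le] | [u_fits u_le]]; split => //.
  by move=> j j_lt; apply: u_le; rewrite mem_iota.
by apply/allP => j; rewrite mem_iota => /andP[_ /u_le].
Qed.

Lemma inSP u w :
  reflect (embeds_at u w (size w - size u) /\
           forall p, embeds_at u w p -> p = size w - size u)
          (inS u w).
Proof.
apply: (iffP andP) => [[/andP[_ emb_end] /allP uniq_emb] | [emb_end uniq_emb]].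
  split => // p emb_p; apply/eqP/(implyP (uniq_emb p _) emb_p).
  by rewrite mem_iota; case/embeds_atP: emb_p; lia.
split; last by apply/allP => p _; apply/implyP => /uniq_emb ->.
rewrite emb_end andbT; apply/hasP; exists (size w - size u) => //.
by rewrite mem_iota; lia.
Qed.

Lemma inSE u w : inS u w =
  embeds_at u w (size w - size u) && all (fun p => ~~ embeds_at u w p) (iota 0 (size w - size u)).
Proof.
apply/inSP/andP => [[emb_end uniq_emb] | [emb_end /allP no_emb]]; split => //.
  by apply/allP => p; rewrite mem_iota => p_lt; apply/negP => /uniq_emb; lia.
move=> p emb_p; have := no_emb p; rewrite mem_iota emb_p /=.
by case/embeds_atP: emb_p => p_fits _ /implyP; rewrite implybF; lia.
Qed.

Lemma inS_size u w : inS u w -> size u <= size w.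
Proof. by case/inSP => /embeds_atP[fits _] _; lia. Qed.

Lemma inS_suffix u w q : inS u w -> q < size u -> nth 0 u q <= nth 0 w (size w - size u + q).
Proof. by case/inSP => /embeds_atP[_ u_le] _ /u_le. Qed.

Lemma incdec_no_valley u x y z : incdec u -> x < y -> y < z -> z < size u ->
  nth 0 u x <= nth 0 u y \/ nth 0 u z <= nth 0 u y.
Proof.
move=> /orP[u_sorted | /hasP[k k_in /andP[/andP[inc_k _] dec_k]]] x_y y_z z_u.
  by left; apply: (sorted_leq_nth leq_trans leqnn) => //; rewrite ?inE; lia.
rewrite mem_iota in k_in; case: (ltnP y k) => y_k.
  left; rewrite -(nth_take 0 y_k) -(nth_take 0 (ltn_trans x_y y_k)).
  by apply: (sorted_leq_nth leq_trans leqnn) => //; rewrite ?inE ?size_take_min; lia.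
right; rewrite -(subnKC y_k) -(@subnKC k z) -?nth_drop; last by lia.
apply: (sorted_leq_nth (fun a b c ba cb => leq_trans cb ba) leqnn) => //;
  rewrite ?inE ?size_drop; lia.
Qed.

Section Excess.

Variables (u : seq nat) (i : nat).
Implicit Types w : seq nat.

(* Truncated subtraction makes this the positive part of u_j - u_(n-i+j), the j-th summand
   of d_ i u. *)
Definition excess j := nth 0 u j - nth 0 u (size u - i + j).

Definition tail_excess N r := if N - i <= r then excess (r - (N - i)) else 0.

Definition raise w := mkseq (fun r => nth 0 w r + tail_excess (size w) r) (size w).
Definition lower w := mkseq (fun r => nth 0 w r - tail_excess (size w) r) (size w).

Definition inS_overlap w := inS u w && embeds_at (take i u) w (size w - i).

Lemma size_raise w : size (raise w) = size w. Proof. exact: size_mkseq. Qed.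
Lemma size_lower w : size (lower w) = size w. Proof. exact: size_mkseq. Qed.

Lemma nth_raise w r : r < size w -> nth 0 (raise w) r = nth 0 w r + tail_excess (size w) r.
Proof. exact: nth_mkseq. Qed.
Lemma nth_lower w r : r < size w -> nth 0 (lower w) r = nth 0 w r - tail_excess (size w) r.
Proof. exact: nth_mkseq. Qed.

Lemma raiseK : cancel raise lower.
Proof.
move=> w; apply: (@eq_from_nth _ 0) => [|r]; rewrite size_lower size_raise // => r_lt.
by rewrite nth_lower ?size_raise // nth_raise // addnK.
Qed.

Lemma sum_tail_excess N : i <= N -> \sum_(0 <= r < N) tail_excess N r = d_ i u.
Proof.
move=> i_N; rewrite (sum_shift_if excess) (_ : N - (N - i) = i); last by lia.
rewrite big_mkord; apply: eq_bigr => j _; rewrite /excess.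
by case: ltnP => // u_le; apply/eqP; rewrite subn_eq0.
Qed.

Lemma sumn_raise w : i <= size w -> sumn (raise w) = sumn w + d_ i u.
Proof.
move=> i_w; rewrite -[in RHS](mkseq_nth 0 w) /raise !sumnE !big_map.
by rewrite big_split -(sum_tail_excess i_w) /index_iota subn0.
Qed.

Lemma posword_raise w : posword w -> posword (raise w).
Proof.
move/all_nthP => pos_w; apply/(all_nthP 0) => r; rewrite size_raise => r_lt.
by rewrite nth_raise // (leq_trans (pos_w 0 r r_lt)) ?leq_addr.
Qed.

Hypothesis i_lt : i < size u.

Lemma inS_overlap_tail w j : inS_overlap w -> j < i ->
  nth 0 u j <= nth 0 w (size w - i + j).
Proof.
case/andP => _ /embeds_atP[_ u_le] j_i.
have i_u : i <= size u := ltnW i_lt.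
by have := u_le j; rewrite size_takel ?nth_take //; apply.
Qed.

Lemma tail_excess_leq w r : inS_overlap w -> r < size w -> tail_excess (size w) r <= nth 0 w r.
Proof.
move=> ov_w r_lt; rewrite /tail_excess; case: ifP => // r_ge.
have u_w := inS_size (proj1 (andP ov_w)).
have x_lt : r - (size w - i) < i by lia.
by have := inS_overlap_tail ov_w x_lt; rewrite /excess subnKC //; lia.
Qed.

Lemma lowerK w : inS_overlap w -> raise (lower w) = w.
Proof.
move=> ov_w; apply: (@eq_from_nth _ 0) => [|r]; rewrite size_raise size_lower // => r_lt.
by rewrite nth_raise ?size_lower // nth_lower // subnK // tail_excess_leq.
Qed.

Lemma lower_suffix w q : inS_overlap w -> q < size u ->
  nth 0 u q <= nth 0 (lower w) (size w - size u + q).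
Proof.
move=> ov_w q_lt; have S_w := proj1 (andP ov_w); have u_w := inS_size S_w.
have := inS_suffix S_w q_lt; rewrite nth_lower; last by lia.
rewrite /tail_excess; case: ifP => [r_ge | _]; last by rewrite subn0.
have [x r_def] : {x | size w - size u + q = size w - i + x} by exists (q - (size u - i)); lia.
have x_lt : x < i by lia.
have := inS_overlap_tail ov_w x_lt.
by rewrite r_def addKn /excess (_ : size u - i + x = q); lia.
Qed.

Lemma inS_lower w : inS_overlap w -> inS u (lower w).
Proof.
move=> ov_w; have S_w := proj1 (andP ov_w); have u_w := inS_size S_w.
have /inSP[_ uniq_emb] := S_w.
apply/inSP; rewrite size_lower; split.
  by apply/embeds_atP; rewrite size_lower; split => [|q /(lower_suffix ov_w)]; first lia.
move=> p /embeds_atP[]; rewrite size_lower => p_fits u_le.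
apply/uniq_emb/embeds_atP; split => // j j_lt; have r_lt : p + j < size w by lia.
by rewrite (leq_trans (u_le j j_lt)) // nth_lower // leq_subr.
Qed.

Lemma inS_overlap_raise w : incdec u -> inS u w -> inS_overlap (raise w).
Proof.
move=> u_incdec S_w; have u_w := inS_size S_w; have /inSP[_ uniq_emb] := S_w.
apply/andP; split; last first.
  apply/embeds_atP; rewrite size_raise size_takel; last exact: ltnW.
  split=> [|j j_i]; first lia.
  have q_lt : size u - i + j < size u by lia.
  have := inS_suffix S_w q_lt; rewrite nth_take // nth_raise; last by lia.
  rewrite /tail_excess ifT ?leq_addr // addKn /excess.
  by rewrite (_ : size w - size u + (size u - i + j) = size w - i + j); lia.
apply/inSP; rewrite size_raise; split.
  apply/embeds_atP; rewrite size_raise; split=> [|q q_lt]; first lia.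
  have r_lt : size w - size u + q < size w by lia.
  by rewrite nth_raise // (leq_trans (inS_suffix S_w q_lt)) ?leq_addr.
move=> p /embeds_atP[]; rewrite size_raise => p_fits u_le.
case: (eqVneq p (size w - size u)) => // p_ne; apply/uniq_emb/embeds_atP.
split=> // j j_lt; have r_lt : p + j < size w by lia.
have := u_le j j_lt; rewrite nth_raise // /tail_excess.
case: ifP => [r_ge | _]; last by rewrite addn0.
(* With y = n - i + x: if u_x > u_y then u_j <= u_y <= w_(p+j), as u has no valley. *)
have [x r_def] : {x | p + j = size w - i + x} by exists (p + j - (size w - i)); lia.
have x_lt : x < size u - i + x by lia.
have y_lt : size u - i + x < j by lia.
have q_lt : size u - i + x < size u by lia.
have := inS_suffix S_w q_lt.
rewrite r_def addKn /excess (_ : size w - size u + (size u - i + x) = size w - i + x); last by lia.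
by case: (incdec_no_valley u_incdec x_lt y_lt j_lt); lia.
Qed.

Lemma posword_lower w : posword u -> posword w -> inS_overlap w -> posword (lower w).
Proof.
move=> /all_nthP pos_u /all_nthP pos_w ov_w.
apply/(all_nthP 0) => r; rewrite size_lower => r_lt.
have u_w := inS_size (proj1 (andP ov_w)).
case: (leqP (size w - size u) r) => r_ge.
  have q_lt : r - (size w - size u) < size u by lia.
  by have := lower_suffix ov_w q_lt; rewrite subnKC //; apply/leq_trans/pos_u.
rewrite nth_lower // /tail_excess; case: ifP => [? | _]; first lia.
by rewrite subn0 pos_w.
Qed.

Lemma sumn_lower w : inS_overlap w -> sumn w = sumn (lower w) + d_ i u.
Proof.
move=> ov_w; have u_w := inS_size (proj1 (andP ov_w)).
by rewrite -sumn_raise ?lowerK // size_lower; lia.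
Qed.

Lemma count_inS_overlap N s : incdec u -> posword u ->
  count inS_overlap (compositions N s) =
  if d_ i u <= s then count (inS u) (compositions N (s - d_ i u)) else 0.
Proof.
move=> u_incdec pos_u; case: leqP => d_s; last first.
  rewrite (@eq_in_count _ _ pred0) ?count_pred0 // => w.
  rewrite mem_compositions => /and3P[_ _ /eqP sum_w] /=.
  by apply/negbTE/negP => /sumn_lower; lia.
rewrite -!size_filter -(size_map lower); apply/perm_size/uniq_perm.
- rewrite map_inj_in_uniq ?filter_uniq ?uniq_compositions // => x y.
  by rewrite !mem_filter => /andP[/lowerK x_K _] /andP[/lowerK y_K _] lower_xy;
    rewrite -x_K lower_xy y_K.
- by rewrite filter_uniq ?uniq_compositions.
move=> y; apply/mapP/idP => [[x] | ].
  rewrite mem_filter mem_compositions => /andP[ov_x /and3P[sz_x pos_x /eqP sum_x]] ->.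
  rewrite mem_filter mem_compositions inS_lower // size_lower sz_x posword_lower //=.
  by rewrite (sumn_lower ov_x) in sum_x; apply/eqP; lia.
rewrite mem_filter mem_compositions => /andP[S_y /and3P[sz_y pos_y /eqP sum_y]].
exists (raise y); last by rewrite raiseK.
rewrite mem_filter mem_compositions inS_overlap_raise // size_raise sz_y posword_raise //=.
have i_y : i <= size y := leq_trans (ltnW i_lt) (inS_size S_y).
by rewrite sumn_raise // sum_y subnK.
Qed.

End Excess.

Lemma embeds_at_take u w M p : M <= size w -> p + size u <= M ->
  embeds_at u (take M w) p = embeds_at u w p.
Proof.
move=> M_w p_fits; have sz_take : size (take M w) = M by rewrite size_takel.
apply/embeds_atP/embeds_atP => -[_ u_le]; rewrite ?sz_take;
  split=> [|j j_lt]; try lia; have r_lt : p + j < M by lia.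
  by rewrite -(nth_take _ r_lt) u_le.
by rewrite nth_take // u_le.
Qed.

Lemma embeds_at_split u i w M : i <= M -> i <= size u -> size w = M + (size u - i) ->
  embeds_at u w (M - i) =
  embeds_at (take i u) (take M w) (M - i) && all2 leq (drop i u) (drop M w).
Proof.
move=> i_M i_u sz_w; have M_w : M <= size w by lia.
apply/embeds_atP/andP => [[_ u_le] | [/embeds_atP[_ head_le] /(all2P 0 0)[_ tail_le]]].
  split.
    apply/embeds_atP; rewrite !size_takel //; split=> [|j j_i]; first lia.
    have r_lt : M - i + j < M by lia.
    by rewrite nth_take // nth_take //; apply: u_le; lia.
  apply/(all2P 0 0); rewrite !size_drop; split=> [|j j_lt]; first lia.
  rewrite !nth_drop (_ : M + j = M - i + (i + j)); last by lia.
  by apply: u_le; lia.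
split=> [|j j_lt]; first lia.
rewrite size_takel // in head_le.
case: (ltnP j i) => j_i.
  have r_lt : M - i + j < M by lia.
  by move: (head_le j j_i); rewrite nth_take // nth_take.
have := tail_le (j - i); rewrite size_drop !nth_drop subnKC //.
by rewrite (_ : M + (j - i) = M - i + j); [apply; lia | lia].
Qed.

Lemma inSi_split u i w M : i <= size u -> size u <= M -> size w = M + (size u - i) ->
  inSi u i w = inS_overlap u i (take M w) && all2 leq (drop i u) (drop M w).
Proof.
move=> i_u u_M sz_w; have M_w : M <= size w by lia.
have i_M : i <= M by lia.
rewrite /inSi /inS_overlap inSE size_takel // (_ : 2 * size u <= size w + i); last first.
  by apply/idP; lia.
rewrite (_ : size w - size u = M - i); last by lia.
rewrite (_ : size w + i - 2 * size u = M - size u); last by lia.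
rewrite embeds_at_split // -(embeds_at_take M_w); last by lia.
rewrite (eq_in_all (a1 := fun p => ~~ embeds_at u w p)
                   (a2 := fun p => ~~ embeds_at u (take M w) p)) => [|p]; last first.
  by rewrite mem_iota => p_lt /=; rewrite embeds_at_take //; lia.
by case: (embeds_at (take i u) _ _); case: (embeds_at u _ _);
   case: (all2 _ _ _); case: (all _ _).
Qed.

Theorem lemma2 (u : seq nat) (i : nat) :
  posword u -> incdec u -> 1 <= i -> i <= size u - 1 ->
  forall m s : nat,
    cnt (inSi u i) m s =
    \sum_(j < s.+1)
      (if (size u - i <= m) && (d_ i u + sumn (drop i u) + j <= s)
       then cnt (inS u) (m - (size u - i)) (s - (d_ i u + sumn (drop i u)) - j)
            * 'C(j + (size u - i) - 1, (size u - i) - 1)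
       else 0).
Proof.
move=> pos_u u_incdec i_gt0 i_le m s; have i_lt : i < size u by lia.
rewrite cnt_compositions; case: (ltnP m (size u + (size u - i))) => [m_lt | m_ge].
  rewrite big1 => [|j _]; last first.
    case: ifP => // _; rewrite cnt_compositions (eq_in_count (a2 := pred0)) ?count_pred0 // => w.
    by rewrite mem_compositions => /and3P[/eqP sz_w _ _]; apply/negP => /inS_size; lia.
  rewrite (eq_in_count (a2 := pred0)) ?count_pred0 // => w.
  rewrite mem_compositions => /and3P[/eqP sz_w _ _].
  by apply/negP => /andP[/andP[/andP[_ len_w] _] _]; lia.
have [M m_def] : {M | m = M + (size u - i)} by exists (m - (size u - i)); lia.
rewrite (eq_in_count (a2 := fun w => inS_overlap u i (take M w) && all2 leq (drop i u) (drop M w)))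
  => [|w]; last first.
  by rewrite mem_compositions => /and3P[/eqP sz_w _ _]; apply: inSi_split; lia.
have pos_drop : posword (drop i u) by apply/allP => x /mem_drop; apply: (allP pos_u).
have sz_drop : size (drop i u) = size u - i := size_drop i u.
rewrite m_def addnK leq_addl -sz_drop count_compositions_cat.
move: pos_drop sz_drop; case: (drop i u) => [|c b] pos_cb //= sz_cb; first by lia.
under eq_big_nat => s1 _ do rewrite count_inS_overlap // count_dominating //.
rewrite (sum_convolution_if (fun t => count (inS u) (compositions M t))
                            (fun j => 'C(j + size b, size b))).
by rewrite big_mkord; apply: eq_bigr => j _; rewrite cnt_compositions addnS !subn1.
Qed.
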